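(* Let $v_1,v_2\in\Sigma^*$ (not necessarily distinct), let $u_1$ be a $v_1$-minimal word and $u_2$ a $v_2$-minimal word, and suppose $\mathrm{supp}(u_1)\neq\mathrm{supp}(u_2)$. Then $\mathrm{supp}(u_1)\cap\mathrm{supp}(u_2)=\emptyset$.
   Context: Let $\mathcal{A}=\langle Q,\Sigma,\delta\rangle$ be a synchronizing automaton with $n$ states $q_1,\dots,q_n$. Each word acts linearly on $\mathbb{C}Q$ by $q\mapsto q\cdot u$, preserving $w^\perp=\{x:\langle x,q_1+\dots+q_n\rangle=0\}$; let $\rho:\Sigma^*\to\mathbb{M}_{n-1}(\mathbb{C})$ be the induced representation and $\mathcal{R}$ the $\mathbb{C}$-algebra generated by $\rho(\Sigma^* )$. Write $\mathcal{R}/\mathrm{Rad}(\mathcal{R})\cong\prod_{i=1}^k\mathbb{M}_{n_i}(\mathbb{C})$ (Jacobson radical, Wedderburn–Artin) and let $\theta_i:\Sigma^*\to\mathbb{M}_{n_i}(\mathbb{C})$ be $\rho$ followed by the quotient map and the $i$-th projection; $0_i$ is the zero matrix. The support of a word $z$ is $\mathrm{supp}(z)=\{i:\theta_i(z)\neq0_i\}$. For $v\in\Sigma^*$, a word $u\in\Sigma^*v\Sigma^*$ is $v$-minimal, and $\mathrm{supp}(u)$ is a ($v$-)minimal section, if $\mathrm{supp}(u)\neq\emptyset$ and there is no $z\in\Sigma^*v\Sigma^*$ with $\emptyset\neq\mathrm{supp}(z)\subsetneq\mathrm{supp}(u)$. *)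

From HB Require Import structures.
From mathcomp Require Import all_boot all_order all_algebra.
Set Implicit Arguments. Unset Strict Implicit. Unset Printing Implicit Defensive.
Import GRing.Theory Num.Theory.
Local Open Scope ring_scope.

(* Automaton with m.+1 states 'I_m.+1 (q_1..q_n with n = m+1), alphabet Sigma,
   transition function delta.  Words are seq Sigma. *)

Section Auto.
Variables (F : numClosedFieldType) (m : nat) (Sigma : finType)
          (delta : 'I_m.+1 -> Sigma -> 'I_m.+1).

Definition act (q : 'I_m.+1) (u : seq Sigma) : 'I_m.+1 := foldl delta q u.

Definition synchronizing : Prop :=
  exists w : seq Sigma, forall p q : 'I_m.+1, act p w = act q w.

(* The induced representation on w^perp = {x | sum of coordinates = 0},
   written in the basis b_i = q_i - q_n (i < m), acting on row vectors:
   b_i . u = q_{i.u} - q_{n.u}, whose coordinate on b_j is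
   [i.u = j] - [n.u = j]. *)
Definition rho (u : seq Sigma) : 'M[F]_m :=
  \matrix_(i < m, j < m)
    ((widen_ord (leqnSn m) j == act (widen_ord (leqnSn m) i) u)%:R
     - (widen_ord (leqnSn m) j == act ord_max u)%:R).

(* R = the F-algebra generated by rho(Sigma^* ): the smallest set of matrices
   containing 1 and every rho u, closed under +, scaling and product. *)
Definition inR (A : 'M[F]_m) : Prop :=
  forall S : 'M[F]_m -> Prop,
    S 1%:M ->
    (forall u, S (rho u)) ->
    (forall B C, S B -> S C -> S (B + C)) ->
    (forall (a : F) B, S B -> S (a *: B)) ->
    (forall B C, S B -> S C -> S (B *m C)) ->
    S A.

Definition inRad (A : 'M[F]_m) : Prop :=
  inR A /\ forall B, inR B ->
    exists C, inR C /\ C *m (1%:M - B *m A) = 1%:M /\ (1%:M - B *m A) *m C = 1%:M.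

(* theta : a Wedderburn--Artin decomposition  R / Rad(R) ~= prod_i M_{ns i}(F):
   theta i is rho followed by the quotient map and the i-th projection. *)
Definition wedderburn (k : nat) (ns : 'I_k -> nat)
    (theta : forall i : 'I_k, 'M[F]_m -> 'M[F]_(ns i)) : Prop :=
  (forall i, (0 < ns i)%N) /\
  (forall i, theta i 1%:M = 1%:M) /\
  (forall i A B, inR A -> inR B -> theta i (A + B) = theta i A + theta i B) /\
  (forall i (a : F) A, inR A -> theta i (a *: A) = a *: theta i A) /\
  (forall i A B, inR A -> inR B -> theta i (A *m B) = theta i A *m theta i B) /\
  (forall Bs : forall i : 'I_k, 'M[F]_(ns i),
      exists A, inR A /\ forall i, theta i A = Bs i) /\
  (forall A, inR A -> (inRad A <-> forall i, theta i A = 0)).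

Definition supp (k : nat) (ns : 'I_k -> nat)
    (theta : forall i : 'I_k, 'M[F]_m -> 'M[F]_(ns i)) (z : seq Sigma) : {set 'I_k} :=
  [set i : 'I_k | theta i (rho z) != 0].

Definition contains_factor (v u : seq Sigma) : Prop :=
  exists x y : seq Sigma, u = x ++ v ++ y.

Definition v_minimal (k : nat) (ns : 'I_k -> nat)
    (theta : forall i : 'I_k, 'M[F]_m -> 'M[F]_(ns i)) (v u : seq Sigma) : Prop :=
  [/\ contains_factor v u,
      supp theta u != set0
    & ~ exists z, contains_factor v z /\ supp theta z != set0 /\
                  supp theta z \proper supp theta u].

End Auto.

From mathcomp Require Import all_boot all_order all_algebra.
From Stdlib Require Import Classical.
Set Implicit Arguments. Unset Strict Implicit. Unset Printing Implicit Defensive.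
Import GRing.Theory Num.Theory.
Local Open Scope ring_scope.

(* If i lies in supp u1 and in supp u2: theta_i maps R onto the full matrix
   algebra M_{n_i}, which is prime, so theta_i(rho(u1) X rho(u2)) <> 0 for some
   X in R; since R is spanned by rho(Sigma^* ), X may be taken to be rho(w).
   Then z = u1 w u2 has nonempty support contained in supp u1 and in supp u2,
   and minimality forces supp u1 = supp z = supp u2. *)

Lemma mulmx_delta_sandwich (R : pzSemiRingType) m n p q
    (A : 'M[R]_(m, n)) (B : 'M[R]_(p, q)) c r' r c' :
  (A *m delta_mx c r' *m B) r c' = A r c * B r' c'.
Proof.
rewrite -(mul_delta_mx (0 : 'I_1)) mulmxA -colE -mulmxA -rowE.
by rewrite mxE big_ord1 !mxE.
Qed.

Lemma mx_prime (R : idomainType) m n p q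
    (A : 'M[R]_(m, n)) (B : 'M[R]_(p, q)) :
  A != 0 -> B != 0 -> exists X : 'M[R]_(n, p), A *m X *m B != 0.
Proof.
case/matrix0Pn=> r [c Arc]; case/matrix0Pn=> r' [c' Br'c'].
exists (delta_mx c r'); apply/matrix0Pn; exists r, c'.
by rewrite mulmx_delta_sandwich mulf_neq0.
Qed.

Lemma contains_factor_cat (Sigma : finType) (v u x y : seq Sigma) :
  contains_factor v u -> contains_factor v (x ++ u ++ y).
Proof. by case=> x' [y' ->]; exists (x ++ x'), (y' ++ y); rewrite -!catA. Qed.

Section Representation.
Variables (F : numClosedFieldType) (m : nat) (Sigma : finType)
          (delta : 'I_m.+1 -> Sigma -> 'I_m.+1).
Local Notation rho := (rho F delta).
Local Notation inR := (@inR F m Sigma delta).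

Lemma rho_nil : rho [::] = 1%:M.
Proof.
apply/matrixP => i j; rewrite !mxE /act /=.
have -> : (widen_ord (leqnSn m) j == ord_max) = false.
  by apply/negbTE; rewrite -val_eqE /= neq_ltn ltn_ord.
have -> : (widen_ord (leqnSn m) j == widen_ord (leqnSn m) i) = (i == j).
  by rewrite -val_eqE /= eq_sym.
by rewrite subr0.
Qed.

(* Both sides are computed on all states q_p: the extra term p = n of the sum
   vanishes because f n, the coordinate of q_{n.v} - q_{n.v} on b_j, is 0. *)
Lemma rho_cat (u v : seq Sigma) : rho (u ++ v) = rho u *m rho v.
Proof.
apply/matrixP => i j; rewrite !mxE.
set f := fun p : 'I_m.+1 => ((widen_ord (leqnSn m) j == act delta p v)%:R
   - (widen_ord (leqnSn m) j == act delta ord_max v)%:R : F).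
have pick_f a : \sum_p (p == a)%:R * f p = f a.
  rewrite (bigD1 a) //= eqxx mul1r big1 ?addr0 // => p /negbTE ->.
  by rewrite mul0r.
transitivity (\sum_(p < m.+1) (((p == act delta (widen_ord (leqnSn m) i) u)%:R
   - (p == act delta ord_max u)%:R) * f p)).
  rewrite (eq_bigr (fun p => (p == act delta (widen_ord (leqnSn m) i) u)%:R * f p
     - (p == act delta ord_max u)%:R * f p)); last by move=> p _; rewrite mulrBl.
  by rewrite sumrB !pick_f /f /act !foldl_cat opprB addrA subrK.
rewrite big_ord_recr /= /f subrr mulr0 addr0; apply: eq_bigr => l _.
by rewrite !mxE.
Qed.

Lemma inR1 : inR 1%:M. Proof. by move=> S. Qed.
Lemma inR_rho u : inR (rho u). Proof. by move=> S _ Srho. Qed.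

Lemma inRD A B : inR A -> inR B -> inR (A + B).
Proof.
by move=> RA RB S S1 Srho SD SZ SM; apply: (SD); [exact: RA | exact: RB].
Qed.

Lemma inRZ a A : inR A -> inR (a *: A).
Proof. by move=> RA S S1 Srho SD SZ SM; apply: (SZ); exact: RA. Qed.

Lemma inRM A B : inR A -> inR B -> inR (A *m B).
Proof.
by move=> RA RB S S1 Srho SD SZ SM; apply: (SM); [exact: RA | exact: RB].
Qed.

Section LinearOnR.
Variables (V : lmodType F) (f : 'M[F]_m -> V).
Hypothesis fD : forall A B, inR A -> inR B -> f (A + B) = f A + f B.
Hypothesis fZ : forall a A, inR A -> f (a *: A) = a *: f A.

(* K = {Y in R | f (rho w *m Y) = 0 for all w} is a subspace, and the
   elements of R mapping K into K by right multiplication contain 1 and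
   rho(Sigma^* ) and are closed under the algebra operations, hence exhaust R;
   applying this to 1 in K and w = [::] gives f X = 0. *)
Lemma inR_linear_eq0 :
  (forall w, f (rho w) = 0) -> forall X, inR X -> f X = 0.
Proof.
move=> f_rho X RX.
pose K Y := inR Y /\ forall w, f (rho w *m Y) = 0.
pose KM X := inR X /\ forall Y, K Y -> K (X *m Y).
have K1 : K 1%:M by split=> [|w]; rewrite ?mulmx1 //; apply: inR1.
suff [_ /(_ _ K1)[_ /(_ [::])]] : KM X by rewrite rho_nil mul1mx mulmx1.
apply: RX.
- by split=> [|Y]; rewrite ?mul1mx //; apply: inR1.
- move=> u; split=> [|Y [RY KY]]; first exact: inR_rho.
  split=> [|w]; first by apply: inRM => //; apply: inR_rho.
  by rewrite mulmxA -rho_cat.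
- move=> B C [RB KB] [RC KC]; split=> [|Y KYY]; first exact: inRD.
  have [RBY KBY] := KB Y KYY; have [RCY KCY] := KC Y KYY.
  split=> [|w]; rewrite mulmxDl; first exact: inRD.
  by rewrite mulmxDr fD ?KBY ?KCY ?addr0 //; apply: inRM => //; apply: inR_rho.
- move=> a B [RB KB]; split=> [|Y KYY]; first exact: inRZ.
  have [RBY KBY] := KB Y KYY.
  split=> [|w]; rewrite -scalemxAl; first exact: inRZ.
  by rewrite -scalemxAr fZ ?KBY ?scaler0 //; apply: inRM => //; apply: inR_rho.
- move=> B C [RB KB] [RC KC]; split=> [|Y KYY]; first exact: inRM.
  by rewrite -mulmxA; apply/KB/KC.
Qed.

End LinearOnR.

Section AlgebraMorphism.
Variables (n : nat) (th : 'M[F]_m -> 'M[F]_n).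
Hypothesis thD : forall A B, inR A -> inR B -> th (A + B) = th A + th B.
Hypothesis thZ : forall a A, inR A -> th (a *: A) = a *: th A.
Hypothesis thM : forall A B, inR A -> inR B -> th (A *m B) = th A *m th B.

Lemma morph_rho_cat u v : th (rho (u ++ v)) = th (rho u) *m th (rho v).
Proof. by rewrite rho_cat thM //; apply: inR_rho. Qed.

Lemma morph_rho_sandwich_neq0 u1 u2 :
  (forall B, exists2 A, inR A & th A = B) ->
  th (rho u1) != 0 -> th (rho u2) != 0 ->
  exists w, th (rho (u1 ++ w ++ u2)) != 0.
Proof.
move=> th_onto nz1 nz2; apply: NNPP => no_w.
have [Y] := mx_prime nz1 nz2; have [X RX <-] := th_onto Y.
apply/negP; rewrite negbK.
apply/eqP; apply: (inR_linear_eq0 (f := fun Z => th (rho u1) *m th Z *m th (rho u2))).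
- by move=> A B RA RB; rewrite thD // mulmxDr mulmxDl.
- by move=> a A RA; rewrite thZ // -scalemxAr -scalemxAl.
- move=> w; apply/eqP; apply: contra_notT no_w => nz; exists w.
  by rewrite !morph_rho_cat mulmxA.
- exact: RX.
Qed.

End AlgebraMorphism.

Section Supports.
Variables (k : nat) (ns : 'I_k -> nat)
          (theta : forall i : 'I_k, 'M[F]_m -> 'M[F]_(ns i)).
Local Notation supp := (supp delta theta).

Lemma supp_cat (thetaM : forall i A B, inR A -> inR B ->
                  theta i (A *m B) = theta i A *m theta i B) u v :
  supp (u ++ v) \subset supp u :&: supp v.
Proof.
apply/subsetP => i; rewrite !inE (morph_rho_cat (thetaM i)) => nz.
by apply/andP; split; apply: contraNneq nz => ->; rewrite ?mul0mx ?mulmx0.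
Qed.

Lemma v_minimal_supp_eq v u z :
  v_minimal delta theta v u -> contains_factor v z ->
  supp z != set0 -> supp z \subset supp u -> supp z = supp u.
Proof.
case=> _ _ no_smaller vz nz zu; apply/eqP; rewrite eqEproper zu /=.
by apply/negP => zu_proper; apply: no_smaller; exists z.
Qed.

Lemma wedderburn_component_onto :
  wedderburn delta theta ->
  forall i (B : 'M_(ns i)), exists2 A, inR A & theta i A = B.
Proof.
case=> _ [_ [_ [_ [_ [onto _]]]]] i B.
have [A [RA thA]] := onto (dfwith (fun j => 0) B).
by exists A; rewrite // thA dfwith_in.
Qed.

End Supports.

End Representation.

Theorem mainTheorem7 (F : numClosedFieldType) (m : nat) (Sigma : finType)
    (delta : 'I_m.+1 -> Sigma -> 'I_m.+1)
    (Hsync : synchronizing delta)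
    (k : nat) (ns : 'I_k -> nat)
    (theta : forall i : 'I_k, 'M[F]_m -> 'M[F]_(ns i))
    (Hwed : wedderburn delta theta)
    (v1 v2 u1 u2 : seq Sigma)
    (Hu1 : v_minimal delta theta v1 u1)
    (Hu2 : v_minimal delta theta v2 u2)
    (Hneq : supp delta theta u1 != supp delta theta u2) :
  supp delta theta u1 :&: supp delta theta u2 = set0.
Proof.
have onto := wedderburn_component_onto Hwed.
case: Hwed => _ [_ [thD [thZ [thM _]]]].
apply/eqP; apply: contraNT Hneq => /set0Pn[i /setIP[i1 i2]].
rewrite !inE in i1 i2.
have [w nz_i] := morph_rho_sandwich_neq0 (thD i) (thZ i) (thM i) (onto i) i1 i2.
set z := u1 ++ w ++ u2 in nz_i.
have z_sub : supp delta theta z \subset supp delta theta u1 :&: supp delta theta u2.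
  apply: subset_trans (supp_cat thM _ _) _; rewrite setIS //.
  by apply: subset_trans (supp_cat thM _ _) _; apply: subsetIr.
have nz_z : supp delta theta z != set0 by apply/set0Pn; exists i; rewrite inE.
have [v1u1 _ _] := Hu1; have [v2u2 _ _] := Hu2.
have v1z : contains_factor v1 z by apply: (contains_factor_cat [::]).
have v2z : contains_factor v2 z.
  by rewrite /z -[u2]cats0 catA; apply: contains_factor_cat.
rewrite -(v_minimal_supp_eq Hu1 v1z nz_z (subset_trans z_sub (subsetIl _ _))).
by rewrite -(v_minimal_supp_eq Hu2 v2z nz_z (subset_trans z_sub (subsetIr _ _))).
Qed.
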